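(* Let $\mathcal{H}_1,\mathcal{H}_2$ be hypothesis classes and $\mathcal{H}=\mathcal{H}_1\cdot\mathcal{H}_2$. Then for all integers $t\ge0$, $\mathcal{S}(\mathcal{H},t)\le\mathcal{S}(\mathcal{H}_1,t)\cdot\mathcal{S}(\mathcal{H}_2,t)$.
   Context: Hypotheses are maps $\mathcal{X}\to\{-1,+1\}$; $\mathcal{H}_1\cdot\mathcal{H}_2=\{x\mapsto h_1(x)h_2(x):h_1\in\mathcal{H}_1,h_2\in\mathcal{H}_2\}$. A depth-$t$ $\mathcal{X}$-valued tree $\mathbf{x}$ is a sequence of maps $\mathbf{x}_s:\{\pm1\}^{s-1}\to\mathcal{X}$, $s=1,\dots,t$; write $\mathbf{x}_s(\epsilon)=\mathbf{x}_s(\epsilon_1,\dots,\epsilon_{s-1})$. $S(\mathcal{H},\mathbf{x})=\{\epsilon\in\{\pm1\}^t:\exists h\in\mathcal{H},\ \epsilon_s=h(\mathbf{x}_s(\epsilon))\ \forall s\le t\}$; $\mathcal{S}(\mathcal{H},t)=\max_{\mathbf{x}}|S(\mathcal{H},\mathbf{x})|$ over depth-$t$ trees for $t\ge1$, and $\mathcal{S}(\mathcal{H},0)=1$ if $\mathcal{H}\ne\emptyset$, $0$ otherwise. *)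

From mathcomp Require Import all_boot.
From mathcomp Require Import boolp.
Set Implicit Arguments. Unset Strict Implicit. Unset Printing Implicit Defensive.

(* Labels {-1,+1} are encoded by bool:  b : bool stands for (-1)^b,
   i.e. false = +1, true = -1.  Under this encoding the product of two
   labels is exclusive or (addb). *)
Definition sign_mul (a b : bool) : bool := addb a b.

Definition hclass (X : Type) := (X -> bool) -> Prop.

Definition prod_class (X : Type) (H1 H2 : hclass X) : hclass X :=
  fun h => exists h1 h2, H1 h1 /\ H2 h2 /\ h = (fun x => sign_mul (h1 x) (h2 x)).

(* An X-valued tree: the node reached after the sign prefix (eps_1,...,eps_{s-1})
   is tr [:: eps_1; ...; eps_{s-1}].  A depth-t tree is such a map restricted to
   prefixes of length < t (x_s(eps) = tr (take (s-1) eps)). *)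
Definition xtree (X : Type) := seq bool -> X.

(* S(H, x): sign sequences eps in {+-1}^t realised along the tree by some h in H.
   With 0-based index i = s-1:  eps_i = h (x (eps_0..eps_{i-1})). *)
Definition realized (X : Type) (H : hclass X) (t : nat) (tr : xtree X)
  (eps : t.-tuple bool) : Prop :=
  exists h, H h /\ forall i : 'I_t, tnth eps i = h (tr (take i eps)).

Definition Sset (X : Type) (H : hclass X) (t : nat) (tr : xtree X) : {set t.-tuple bool} :=
  [set eps | `[< realized H tr eps >] ].

(* S(H, t): for t >= 1 the maximum of |S(H,x)| over depth-t trees x
   (values lie in [0, 2^t], so the max is a finite max over attained values;
   it is 0 if there is no tree, i.e. X empty); S(H,0) = 1 if H is nonempty, else 0. *)
Definition Sdim (X : Type) (H : hclass X) (t : nat) : nat :=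
  if t is 0 then (if `[< exists h, H h >] then 1 else 0)
  else \max_(n < (2 ^ t).+1 | `[< exists tr : xtree X, #|Sset H t tr| = n >]) n.

(** Splitting the sign sequences realised along a tree according to their first
    sign shows |S(H, x)| = |S(H⁺, x⁺)| + |S(H⁻, x⁻)|, where H^b is the subclass
    taking value b at the root and x^b the subtree below the b-edge; grafting
    extremal trees under a common root gives S(H⁺, t) + S(H⁻, t) <= S(H, t+1).
    A product h1 h2 has root value b exactly when h1 has root value b1 and h2
    has root value b1 * b for some b1, so by induction on t

      |S(H1 H2, x)| <= Σ_b Σ_b1 S(H1^b1, t) S(H2^(b1 b), t)
                     = (S(H1⁺, t) + S(H1⁻, t)) (S(H2⁺, t) + S(H2⁻, t))
                    <= S(H1, t+1) S(H2, t+1). *)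

From mathcomp Require Import all_boot.
From mathcomp Require Import boolp.

Set Implicit Arguments.
Unset Strict Implicit.
Unset Printing Implicit Defensive.

Section Shattering.

Variable X : Type.
Implicit Types (H : hclass X) (tr : xtree X).

Definition restrict_class H (x0 : X) (b : bool) : hclass X :=
  fun h => H h /\ h x0 = b.

Definition union_class (A B : hclass X) : hclass X := fun h => A h \/ B h.

Definition subtree tr (b : bool) : xtree X := fun s => tr (b :: s).

Definition graft_tree (x0 : X) (trT trF : xtree X) : xtree X :=
  fun s => if s is b :: s' then (if b then trT s' else trF s') else x0.

Lemma realized_cons H t tr b (e : t.-tuple bool) :
  realized H tr [tuple of b :: e] <->
  realized (restrict_class H (tr [::]) b) (subtree tr b) e.
Proof.
split.
- move=> [h [Hh realized_h]]; exists h; split; first split => //.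
  + by have := realized_h ord0; rewrite (tnth_nth b) /= => ->.
  + by move=> j; have := realized_h (lift ord0 j); rewrite tnthS.
- move=> [h [[Hh h_root] realized_h]]; exists h; split => // i.
  case: (unliftP ord0 i) => [j ->|->].
  + by rewrite tnthS realized_h.
  + by rewrite (tnth_nth b) /= h_root.
Qed.

Lemma card_SsetS H t tr :
  #|Sset H t.+1 tr| = #|Sset (restrict_class H (tr [::]) true) t (subtree tr true)|
                    + #|Sset (restrict_class H (tr [::]) false) t (subtree tr false)|.
Proof.
pose cons_tuple b (e : t.-tuple bool) := [tuple of b :: e].
have cons_inj b : injective (cons_tuple b).
  by move=> e1 e2 /(congr1 val) [] /val_inj.
have Sset_head b : Sset H t.+1 tr :&: [set y | thead y == b]
    = cons_tuple b @: Sset (restrict_class H (tr [::]) b) t (subtree tr b).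
  apply/setP => y; case/tupleP: y => b' e; rewrite !inE theadE.
  apply/idP/imsetP.
  - case/andP => /asboolP realized_e /eqP <-; exists e => //.
    by rewrite inE; apply/asboolP/realized_cons.
  - case=> e' /[!inE] /asboolP realized_e' /(congr1 val) /= [-> /val_inj ->].
    by rewrite eqxx andbT; apply/asboolP/realized_cons.
rewrite -(cardsID [set y | thead y == true] (Sset H t.+1 tr)).
rewrite Sset_head (card_imset _ (cons_inj true)); congr (_ + _).
rewrite -(card_imset _ (cons_inj false)) -Sset_head; apply: eq_card => y.
by rewrite !inE andbC; case: (thead y).
Qed.

Lemma card_Sset_le_exp H t tr : #|Sset H t tr| <= 2 ^ t.
Proof. by apply: leq_trans (max_card _) _; rewrite card_tuple card_bool. Qed.

Lemma Sdim0_nonempty H h : H h -> Sdim H 0 = 1.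
Proof. by move=> Hh /=; rewrite asboolT //; exists h. Qed.

Lemma Sset_le_Sdim H t tr : #|Sset H t tr| <= Sdim H t.
Proof.
case: t tr => [|t] tr.
- have [->//|] := posnP #|Sset H 0 tr|.
  case/card_gt0P => e /[!inE] /asboolP [h [Hh _]].
  by rewrite (Sdim0_nonempty Hh); apply: card_Sset_le_exp.
- have card_lt : #|Sset H t.+1 tr| < (2 ^ t.+1).+1 by rewrite ltnS card_Sset_le_exp.
  apply: (@leq_bigmax_cond _ _ (@nat_of_ord _) (Ordinal card_lt)).
  by apply/asboolP; exists tr.
Qed.

Lemma SdimS_le H t n : (forall tr, #|Sset H t.+1 tr| <= n) -> Sdim H t.+1 <= n.
Proof. by move=> card_le; apply/bigmax_leqP => i /asboolP [tr <-]. Qed.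

Lemma Sdim_attained H t (x0 : X) : exists tr, #|Sset H t tr| = Sdim H t.
Proof.
case: t => [|t].
- exists (fun _ => x0); apply/eqP; rewrite eqn_leq Sset_le_Sdim /=.
  case: asboolP => [[h Hh]|//]; rewrite card_gt0; apply/set0Pn.
  by exists [tuple]; rewrite inE; apply/asboolP; exists h; split => // [[]].
- pose P (n : 'I_(2 ^ t.+1).+1) := `[< exists tr, #|Sset H t.+1 tr| = n >].
  have card_lt : #|Sset H t.+1 (fun _ => x0)| < (2 ^ t.+1).+1.
    by rewrite ltnS card_Sset_le_exp.
  have : 0 < #|P|.
    by apply/card_gt0P; exists (Ordinal card_lt); apply/asboolP; exists (fun _ => x0).
  move/(eq_bigmax_cond (@nat_of_ord _)) => [i /asboolP [tr <-] max_i].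
  exists tr; rewrite -max_i; apply: eq_bigl => j; by rewrite unfold_in.
Qed.

Lemma Sdim_restrict_le H x0 t :
  Sdim (restrict_class H x0 true) t + Sdim (restrict_class H x0 false) t <= Sdim H t.+1.
Proof.
have [trT <-] := Sdim_attained (restrict_class H x0 true) t x0.
have [trF <-] := Sdim_attained (restrict_class H x0 false) t x0.
by have := Sset_le_Sdim H t.+1 (graft_tree x0 trT trF); rewrite card_SsetS.
Qed.

Lemma card_Sset_sub (A B : hclass X) t tr :
  (forall h, A h -> B h) -> #|Sset A t tr| <= #|Sset B t tr|.
Proof.
move=> subAB; apply/subset_leq_card/subsetP => e /[!inE] /asboolP [h [Ah realized_h]].
by apply/asboolP; exists h; split => //; apply: subAB.
Qed.

Lemma card_Sset_union (A B : hclass X) t tr :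
  #|Sset (union_class A B) t tr| <= #|Sset A t tr| + #|Sset B t tr|.
Proof.
apply: leq_trans (leq_card_setU (Sset A t tr) (Sset B t tr)).
apply/subset_leq_card/subsetP => e /[!inE] /asboolP [h [[Ah|Bh] realized_h]].
- by apply/orP; left; apply/asboolP; exists h.
- by apply/orP; right; apply/asboolP; exists h.
Qed.

Lemma restrict_prod_class_sub (H1 H2 : hclass X) x0 b h :
  restrict_class (prod_class H1 H2) x0 b h ->
  union_class
    (prod_class (restrict_class H1 x0 true) (restrict_class H2 x0 (addb true b)))
    (prod_class (restrict_class H1 x0 false) (restrict_class H2 x0 (addb false b))) h.
Proof.
move=> [[h1 [h2 [H1h1 [H2h2 ->]]]] <-]; rewrite /sign_mul.
by case h1x0: (h1 x0); [left | right]; exists h1, h2; rewrite addKb; do !split.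
Qed.

Lemma Sdim0_prod_le (H1 H2 : hclass X) :
  Sdim (prod_class H1 H2) 0 <= Sdim H1 0 * Sdim H2 0.
Proof.
rewrite {1}/Sdim; case: asboolP => // [[_ [h1 [h2 [H1h1 [H2h2 _]]]]]].
by rewrite (Sdim0_nonempty H1h1) (Sdim0_nonempty H2h2).
Qed.

Lemma card_Sset_prod_le t (H1 H2 : hclass X) tr :
  #|Sset (prod_class H1 H2) t tr| <= Sdim H1 t * Sdim H2 t.
Proof.
elim: t H1 H2 tr => [|t IH] H1 H2 tr.
  exact: leq_trans (Sset_le_Sdim _ _ _) (Sdim0_prod_le H1 H2).
set x0 := tr [::].
set a1 := Sdim (restrict_class H1 x0 true) t.
set b1 := Sdim (restrict_class H1 x0 false) t.
set a2 := Sdim (restrict_class H2 x0 true) t.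
set b2 := Sdim (restrict_class H2 x0 false) t.
have card_branch b : #|Sset (restrict_class (prod_class H1 H2) x0 b) t (subtree tr b)|
    <= a1 * Sdim (restrict_class H2 x0 (addb true b)) t
     + b1 * Sdim (restrict_class H2 x0 (addb false b)) t.
  apply: leq_trans (card_Sset_sub _ _ (restrict_prod_class_sub (b := b))) _.
  by apply: leq_trans (card_Sset_union _ _ _ _) _; apply: leq_add; apply: IH.
rewrite card_SsetS -/x0.
apply: leq_trans (leq_add (card_branch true) (card_branch false)) _ => /=.
apply: leq_trans (leq_mul (Sdim_restrict_le H1 x0 t) (Sdim_restrict_le H2 x0 t)).
by rewrite -/a1 -/b1 -/a2 -/b2 mulnDl !mulnDr addnC addnACA [b1 * b2 + _]addnC.
Qed.

End Shattering.

Theorem mainTheorem15 (X : Type) (H1 H2 : hclass X) (t : nat) :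
  Sdim (prod_class H1 H2) t <= Sdim H1 t * Sdim H2 t.
Proof.
case: t => [|t]; first exact: Sdim0_prod_le.
by apply: SdimS_le => tr; apply: card_Sset_prod_le.
Qed.
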